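(* Let $n$ be a non-negative integer and $r,s\in\mathbb{C}\setminus\mathbb{Z}^{-}$ with $s\neq0$ and $r-s\notin\mathbb{Z}^{-}$. Then \[ \sum_{k=0}^{n}\binom{n}{k}\frac{1}{(k+2)(k+s)\binom{n+r}{k+s}}=\sum_{k=0}^{n}\binom{n}{k}\frac{(-1)^k}{(k+1)(k+2)(k+s)\binom{k+r}{k+s}}. \]
   Context: $\mathbb{Z}^{-}$ denotes the set of negative integers. Binomial coefficients with complex entries: $\binom{x}{y}=\frac{\Gamma(x+1)}{\Gamma(y+1)\Gamma(x-y+1)}$. *)

From Stdlib Require Import Reals Arith List.
From Coquelicot Require Import Coquelicot.
Open Scope C_scope.

(* x^z for a real x > 0 and complex z:  exp(z ln x). *)
Definition Cpow_pos (x : R) (z : C) : C :=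
  RtoC (exp (Re z * ln x)) * (cos (Im z * ln x), sin (Im z * ln x)).

Definition gauss_seq (z : C) (m : nat) : C :=
  RtoC (INR (fact m)) * Cpow_pos (INR m) z
  / fold_right Cmult 1 (List.map (fun j => z + RtoC (INR j)) (List.seq 0 (S m))).

(* Complex Gamma function (Gauss' limit formula), valid on C \ {0,-1,-2,...}. *)
Definition CGamma (z : C) : C :=
  @lim (CompleteNormedModule.CompleteSpace _ C_CompleteNormedModule)
       (filtermap (gauss_seq z) eventually).

Definition Cbinom (x y : C) : C :=
  CGamma (x + 1) / (CGamma (y + 1) * CGamma (x - y + 1)).

Definition in_Zneg (z : C) : Prop := exists m : nat, z = RtoC (- INR (S m)).

From Stdlib Require Import Reals Arith Lra Lia List.
From Coquelicot Require Import Coquelicot.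

(** Write Gamma(w + k) = (w)_k Gamma(w) (Pochhammer symbol). Then, up to the common
    factor 1 / (s binom(r, s)), the reciprocal binomials on both sides become
    nu(k, l) = (s)_k (r - s + 1)_l / (r + 1)_(k + l), with l = n - k on the left and
    l = 0 on the right. Since (r + 1) + k + l = (s + k) + (r - s + 1 + l), nu satisfies
    the Pascal-type recurrence nu(k, l) = nu(k, l + 1) + nu(k + 1, l), and for any such
    kernel, induction on n with Pascal's rule gives
      sum_k C(n, k) nu(k, n - k) / (p + k) = sum_k C(n, k) (-1)^k B(p, k + 1) nu(k, 0),
    where B(p, k + 1) = k! / (p (p + 1) ... (p + k)). Taking p = 2 gives the identity,
    as B(2, k + 1) = 1 / ((k + 1) (k + 2)).
    The functional equation Gamma(w + 1) = w Gamma(w) for the Gauss-limit definition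
    requires the Gauss sequence to converge; it does, being Cauchy, because
    consecutive terms have ratio 1 + O(1 / m^2). *)

Open Scope R_scope.

Lemma exp_sub_linear_bound a :
  Rabs a <= 1/2 -> 0 <= exp a - 1 - a <= 2 * a^2 /\ exp a <= 2.
Proof.
  intros Ha.
  pose proof (exp_ineq1_le a). pose proof (exp_ineq1_le (-a)).
  assert (E : exp a * exp (-a) = 1).
  { rewrite <- exp_plus. replace (a + - a) with 0 by ring. apply exp_0. }
  pose proof (exp_pos a). pose proof (exp_pos (-a)).
  assert (exp a * (1 - a) <= 1) by nra.
  split_Rabs; split; try split; nra.
Qed.

Lemma exp_le_mono x y : x <= y -> exp x <= exp y.
Proof.
  intros [Hlt | ->]; [now apply Rlt_le, exp_increasing | apply Rle_refl].
Qed.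

Lemma sin_sub_id_bound b :
  Rabs b <= 1/2 -> Rabs (sin b - b) <= b^2 /\ Rabs (sin b) <= Rabs b.
Proof.
  intros Hb.
  assert (H : forall c, 0 <= c <= 1/2 -> c - c^2 <= sin c <= c).
  { intros c Hc. destruct (Req_dec c 0) as [->|Hc0].
    - rewrite sin_0. lra.
    - pose proof (pre_sin_bound c 0 ltac:(lra) ltac:(lra)) as [Hlow _].
      unfold sin_approx, sin_term in Hlow. simpl in Hlow.
      pose proof (sin_lt_x c ltac:(lra)). split; [nra | lra]. }
  destruct (Rle_dec 0 b).
  - specialize (H b ltac:(split_Rabs; lra)). split; split_Rabs; nra.
  - specialize (H (-b) ltac:(split_Rabs; lra)). rewrite sin_neg in H.
    split; split_Rabs; nra.
Qed.

Lemma cos_quadratic_bound b : Rabs b <= 1/2 -> 1 - b^2 <= cos b <= 1.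
Proof.
  intros Hb.
  pose proof (pre_cos_bound b 0 ltac:(split_Rabs; lra) ltac:(split_Rabs; lra)) as [Hlow _].
  unfold cos_approx, cos_term in Hlow. simpl in Hlow.
  pose proof (COS_bound b). nra.
Qed.

Lemma ln_succ_sub_bounds x : 1 <= x -> / (x + 1) <= ln (x + 1) - ln x <= / x.
Proof.
  intros Hx. split.
  - pose proof (exp_ineq1_le (ln (x / (x + 1)))) as H.
    rewrite exp_ln in H by (apply Rdiv_lt_0_compat; lra).
    rewrite ln_div in H by lra.
    replace (x / (x + 1)) with (1 - / (x + 1)) in H by (field; lra). lra.
  - pose proof (exp_ineq1_le (ln ((x + 1) / x))) as H.
    rewrite exp_ln in H by (apply Rdiv_lt_0_compat; lra).
    rewrite ln_div in H by lra.
    replace ((x + 1) / x) with (1 + / x) in H by (field; lra). lra.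
Qed.

Lemma Cmod_le_Rabs_add (x y : R) : Cmod (x, y) <= Rabs x + Rabs y.
Proof.
  replace (x, y) with (RtoC x + (0, y))%C
    by (apply injective_projections; simpl; ring).
  eapply Rle_trans; [apply Cmod_triangle|].
  rewrite Cmod_R. unfold Cmod; simpl.
  replace (0 * (0 * 1) + y * (y * 1)) with (y²) by (unfold Rsqr; ring).
  rewrite sqrt_Rsqr_abs. lra.
Qed.

Open Scope C_scope.

Lemma Cinv_0 : / 0 = 0.
Proof. unfold Cinv; simpl. apply injective_projections; simpl; unfold Rdiv; ring. Qed.

Lemma Cinv_mult_distr (a b : C) : / (a * b) = / a * / b.
Proof.
  destruct (Ceq_dec a 0) as [->|Ha]; [rewrite Cmult_0_l, Cinv_0; ring|].
  destruct (Ceq_dec b 0) as [->|Hb]; [rewrite Cmult_0_r, Cinv_0; ring|].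
  field. split; assumption.
Qed.

Lemma Cmod_add_R_ge (z : C) (x : R) : (0 <= x)%R -> (x - Cmod z <= Cmod (z + x))%R.
Proof.
  intros Hx. pose proof (Cmod_triangle (z + x) (- z)) as H.
  replace (z + x + - z) with (RtoC x) in H by ring.
  rewrite Cmod_R, Rabs_pos_eq, Cmod_opp in H by exact Hx. lra.
Qed.

Definition cexp (w : C) : C := exp (Re w) * (cos (Im w), sin (Im w)).

Lemma Cpow_pos_cexp x z : Cpow_pos x z = cexp (z * ln x).
Proof. unfold Cpow_pos, cexp. rewrite re_scal_r, im_scal_r. reflexivity. Qed.

Lemma cexp_plus u v : cexp (u + v) = cexp u * cexp v.
Proof.
  destruct u as [a b], v as [c d]. unfold cexp; simpl.
  rewrite exp_plus, cos_plus, sin_plus.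
  apply injective_projections; simpl; ring.
Qed.

Lemma cexp_ln x : (0 < x)%R -> cexp (ln x) = x.
Proof.
  intros Hx. unfold cexp; simpl. rewrite exp_ln, cos_0, sin_0 by exact Hx.
  apply injective_projections; simpl; ring.
Qed.

Lemma cexp_sub_linear_bound w :
  (Cmod w <= 1/2)%R -> (Cmod (cexp w - 1 - w) <= 4 * Cmod w ^ 2)%R.
Proof.
  destruct w as [a b]. intros Hw.
  assert (Ha : (Rabs a <= 1/2)%R).
  { eapply Rle_trans; [apply (re_le_Cmod (a, b)) | exact Hw]. }
  assert (Hb : (Rabs b <= 1/2)%R).
  { eapply Rle_trans; [|exact Hw].
    eapply Rle_trans; [|apply (Rmax_Cmod (a, b))]. apply Rmax_r. }
  assert (Hmod : (Cmod (a, b) ^ 2 = a ^ 2 + b ^ 2)%R).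
  { unfold Cmod. apply pow2_sqrt. simpl. nra. }
  rewrite Hmod. unfold cexp; simpl Re; simpl Im.
  replace (exp a * (cos b, sin b) - 1 - (a, b))
    with (((exp a * cos b - 1 - a)%R, (exp a * sin b - b)%R) : C)
    by (apply injective_projections; simpl; ring).
  eapply Rle_trans; [apply Cmod_le_Rabs_add|].
  destruct (exp_sub_linear_bound a Ha) as [E1 E2].
  destruct (cos_quadratic_bound b Hb) as [C1 C2].
  destruct (sin_sub_id_bound b Hb) as [S1 S2].
  pose proof (exp_pos a).
  assert (Hre : (Rabs (exp a * cos b - 1 - a) <= 2 * a^2 + 2 * b^2)%R).
  { replace (exp a * cos b - 1 - a)%R with ((exp a - 1 - a) + exp a * (cos b - 1))%R
      by ring.
    eapply Rle_trans; [apply Rabs_triang|].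
    rewrite Rabs_mult, (Rabs_right (exp a)) by lra.
    assert (Rabs (cos b - 1) <= b^2)%R by (split_Rabs; lra).
    assert (Rabs (exp a - 1 - a) <= 2 * a^2)%R by (split_Rabs; lra).
    nra. }
  assert (Him : (Rabs (exp a * sin b - b) <= a^2 + 2 * b^2)%R).
  { replace (exp a * sin b - b)%R with ((exp a - 1) * sin b + (sin b - b))%R by ring.
    eapply Rle_trans; [apply Rabs_triang|]. rewrite Rabs_mult.
    assert (Rabs (exp a - 1) <= 2 * Rabs a)%R by (split_Rabs; nra).
    assert (Rabs (exp a - 1) * Rabs (sin b) <= 2 * Rabs a * Rabs b)%R.
    { apply Rmult_le_compat; try apply Rabs_pos; lra. }
    assert (2 * Rabs a * Rabs b <= a^2 + b^2)%R.
    { pose proof (pow2_ge_0 (Rabs a - Rabs b)).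
      rewrite <- (pow2_abs a), <- (pow2_abs b). nra. }
    lra. }
  lra.
Qed.

(** * Convergence of the Gauss product *)

Section RatioCauchy.

Variables (a : nat -> C) (K : R) (m0 : nat).
Hypothesis K_ge0 : (0 <= K)%R.
Hypothesis m0_ge2 : (2 <= m0)%nat.
Hypothesis a_step :
  forall m, (m0 <= m)%nat -> (Cmod (a (S m) - a m) <= K / INR m ^ 2 * Cmod (a m))%R.

Open Scope R_scope.

Let INR_ge2 m : (m0 <= m)%nat -> 2 <= INR m.
Proof. intros Hm. replace 2 with (INR 2) by (simpl; ring). apply le_INR. lia. Qed.

Let step_weight_le m : (m0 <= m)%nat -> K / INR m ^ 2 <= K * (/ (INR m - 1) - / INR m).
Proof.
  intros Hm. pose proof (INR_ge2 m Hm).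
  replace (/ (INR m - 1) - / INR m) with (/ (INR m * (INR m - 1))) by (field; lra).
  apply Rmult_le_compat_l; [exact K_ge0|].
  apply Rinv_le_contravar; [nra|]. simpl. nra.
Qed.

Lemma ratio_growth j :
  Cmod (a (m0 + j)%nat)
  <= Cmod (a m0) * exp (K * (/ (INR m0 - 1) - / (INR (m0 + j) - 1))).
Proof.
  induction j as [|j IHj].
  - rewrite Nat.add_0_r, Rminus_diag, Rmult_0_r, exp_0. lra.
  - replace (m0 + S j)%nat with (S (m0 + j)) by lia.
    set (m := (m0 + j)%nat) in *.
    assert (Hm : (m0 <= m)%nat) by lia.
    pose proof (Cmod_ge_0 (a m)).
    assert (Hstep : Cmod (a (S m)) <= Cmod (a m) * exp (K * (/ (INR m - 1) - / INR m))).
    { replace (a (S m)) with (a m + (a (S m) - a m))%C by ring.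
      eapply Rle_trans; [apply Cmod_triangle|].
      pose proof (a_step m Hm). pose proof (step_weight_le m Hm).
      pose proof (exp_ineq1_le (K * (/ (INR m - 1) - / INR m))). nra. }
    eapply Rle_trans; [exact Hstep|].
    eapply Rle_trans; [apply Rmult_le_compat_r; [apply Rlt_le, exp_pos | exact IHj]|].
    rewrite Rmult_assoc, <- exp_plus, S_INR.
    replace (INR m + 1 - 1) with (INR m) by ring.
    right. f_equal. f_equal. ring.
Qed.

Let bound := Cmod (a m0) * exp (K * / (INR m0 - 1)).

Let bound_ge0 : 0 <= bound.
Proof. pose proof (Cmod_ge_0 (a m0)). pose proof (exp_pos (K * / (INR m0 - 1))). unfold bound. nra. Qed.

Lemma ratio_bounded m : (m0 <= m)%nat -> Cmod (a m) <= bound.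
Proof.
  intros Hm. replace m with (m0 + (m - m0))%nat by lia.
  eapply Rle_trans; [apply ratio_growth|].
  apply Rmult_le_compat_l; [apply Cmod_ge_0|].
  pose proof (INR_ge2 (m0 + (m - m0)) ltac:(lia)).
  assert (0 <= K * / (INR (m0 + (m - m0)) - 1)).
  { apply Rmult_le_pos; [exact K_ge0|]. apply Rlt_le, Rinv_0_lt_compat. lra. }
  apply exp_le_mono. lra.
Qed.

Lemma ratio_increment_le N j : (m0 <= N)%nat ->
  Cmod (a (N + j)%nat - a N) <= bound * K * (/ (INR N - 1) - / (INR (N + j) - 1)).
Proof.
  intros HN. induction j as [|j IHj].
  - rewrite Nat.add_0_r. replace (a N - a N)%C with (RtoC 0) by ring. rewrite Cmod_0. lra.
  - replace (N + S j)%nat with (S (N + j)) by lia. set (m := (N + j)%nat) in *.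
    assert (Hm : (m0 <= m)%nat) by lia.
    replace (a (S m) - a N)%C with ((a (S m) - a m) + (a m - a N))%C by ring.
    eapply Rle_trans; [apply Cmod_triangle|].
    pose proof (a_step m Hm). pose proof (ratio_bounded m Hm).
    pose proof (step_weight_le m Hm). pose proof (INR_ge2 m Hm).
    assert (0 <= K / INR m ^ 2).
    { apply Rmult_le_pos; [exact K_ge0|]. apply Rlt_le, Rinv_0_lt_compat. nra. }
    assert (Cmod (a (S m) - a m) <= bound * (K * (/ (INR m - 1) - / INR m))).
    { eapply Rle_trans; [eassumption|]. pose proof (Cmod_ge_0 (a m)).
      rewrite Rmult_comm. apply Rmult_le_compat; auto. }
    rewrite S_INR. replace (INR m + 1 - 1) with (INR m) by ring. nra.
Qed.

Lemma ratio_cauchy (eps : posreal) :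
  exists x, eventually (fun n => Cmod (a n - x) < eps).
Proof.
  destruct (INR_unbounded (bound * K / eps + 1)) as [N0 HN0].
  set (N := (N0 + m0)%nat). exists (a N), N. intros n Hn.
  assert (HN : (m0 <= N)%nat) by (unfold N; lia).
  replace n with (N + (n - N))%nat by lia.
  eapply Rle_lt_trans; [apply ratio_increment_le; exact HN|].
  pose proof (INR_ge2 N HN). pose proof (INR_ge2 (N + (n - N)) ltac:(lia)).
  assert (INR N0 <= INR N) by (apply le_INR; unfold N; lia).
  pose proof (cond_pos eps).
  assert (0 <= bound * K) by (pose proof bound_ge0; nra).
  assert (0 < / (INR (N + (n - N)) - 1)) by (apply Rinv_0_lt_compat; lra).
  assert (bound * K * / (INR N - 1) < eps).
  { apply (Rmult_lt_reg_r (INR N - 1)); [lra|].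
    rewrite Rmult_assoc, Rinv_l by lra.
    assert (bound * K < eps * (INR N - 1)).
    { apply (Rmult_lt_reg_r (/ eps)); [apply Rinv_0_lt_compat; lra|].
      replace (eps * (INR N - 1) * / eps) with (INR N - 1) by (field; lra).
      unfold Rdiv in HN0. lra. }
    lra. }
  nra.
Qed.

End RatioCauchy.

Definition nonpole (w : C) : Prop := forall j : nat, w + INR j <> 0.

Lemma nonpole_add_nat w k : nonpole w -> nonpole (w + INR k).
Proof.
  intros H j E. apply (H (k + j)%nat). rewrite plus_INR, RtoC_plus, <- E. ring.
Qed.

Lemma nonpole_neq0 w : nonpole w -> w <> 0.
Proof. intros H E. apply (H 0%nat). rewrite E. simpl. ring. Qed.

Lemma nonpole_succ w : nonpole w -> nonpole (w + 1).
Proof. intros H j E. apply (H (S j)). rewrite S_INR, RtoC_plus, <- E. ring. Qed.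

Lemma nonpole_of_succ (w : C) : w <> 0 -> nonpole (w + 1) -> nonpole w.
Proof.
  intros H0 H [|j] E.
  - apply H0. transitivity (w + INR 0); [simpl; ring | exact E].
  - apply (H j). transitivity (w + INR (S j)); [rewrite S_INR, RtoC_plus; ring | exact E].
Qed.

Lemma nonpole_pos (x : R) : (0 < x)%R -> nonpole x.
Proof. intros Hx j E. rewrite <- RtoC_plus in E. injection E. pose proof (pos_INR j). lra. Qed.

Lemma not_in_Zneg_nonpole w : ~ in_Zneg w -> nonpole (w + 1).
Proof.
  intros H j E. apply H. exists j. rewrite RtoC_opp, S_INR, RtoC_plus.
  transitivity (w + 1 + INR j - (INR j + 1)); [ring|]. rewrite E. ring.
Qed.

Definition gauss_den (z : C) (m : nat) : C :=
  fold_right Cmult 1 (map (fun j => z + INR j) (seq 0 (S m))).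

Lemma gauss_seqE z m : gauss_seq z m = INR (fact m) * Cpow_pos (INR m) z / gauss_den z m.
Proof. reflexivity. Qed.

Lemma fold_Cmult_seq_S (f : nat -> C) k n :
  fold_right Cmult 1 (map f (seq k (S n)))
  = fold_right Cmult 1 (map f (seq k n)) * f (k + n)%nat.
Proof.
  revert k. induction n as [|n IHn]; intros k.
  - simpl. rewrite Nat.add_0_r. ring.
  - change (seq k (S (S n))) with (k :: seq (S k) (S n)).
    change (seq k (S n)) with (k :: seq (S k) n).
    cbn [map fold_right]. rewrite IHn, Nat.add_succ_comm. ring.
Qed.

Lemma gauss_den_S z m : gauss_den z (S m) = gauss_den z m * (z + INR (S m)).
Proof. apply fold_Cmult_seq_S. Qed.

Lemma gauss_den_succ_l z m : gauss_den z (S m) = z * gauss_den (z + 1) m.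
Proof.
  unfold gauss_den. change (seq 0 (S (S m))) with (0%nat :: seq 1 (S m)).
  rewrite <- seq_shift. cbn [map fold_right]. rewrite map_map.
  replace (z + INR 0) with z by (simpl; ring). do 2 f_equal.
  apply map_ext. intros j. rewrite S_INR, RtoC_plus. ring.
Qed.

Lemma gauss_den_neq0 z m : nonpole z -> gauss_den z m <> 0.
Proof.
  intros H. induction m as [|m IHm].
  - unfold gauss_den; simpl. rewrite Cmult_1_r. exact (H 0%nat).
  - rewrite gauss_den_S. apply Cmult_neq_0; auto.
Qed.

Lemma Cpow_pos_add1 x z : (0 < x)%R -> Cpow_pos x (z + 1) = Cpow_pos x z * x.
Proof.
  intros Hx. rewrite !Cpow_pos_cexp, <- (cexp_ln x Hx).
  rewrite <- cexp_plus. f_equal. ring.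
Qed.

Lemma gauss_seq_S z m : (1 <= m)%nat ->
  gauss_seq z (S m)
  = gauss_seq z m * (INR (S m) * cexp (z * (ln (INR (S m)) - ln (INR m))) / (z + INR (S m))).
Proof.
  intros Hm. rewrite !gauss_seqE, gauss_den_S, fact_simpl, mult_INR, RtoC_mult.
  rewrite !Cpow_pos_cexp.
  replace (z * ln (INR (S m))) with (z * ln (INR m) + z * (ln (INR (S m)) - ln (INR m)))
    by ring.
  rewrite cexp_plus. unfold Cdiv. rewrite Cinv_mult_distr. ring.
Qed.

Lemma gauss_seq_add1 z m : (1 <= m)%nat -> nonpole z ->
  gauss_seq (z + 1) m = gauss_seq z m * (z * INR m / (z + INR (S m))).
Proof.
  intros Hm H. rewrite !gauss_seqE, Cpow_pos_add1 by (apply lt_0_INR; lia).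
  pose proof (gauss_den_neq0 z m H). pose proof (H (S m)). pose proof (nonpole_neq0 z H).
  assert (E : gauss_den (z + 1) m = gauss_den z m * (z + INR (S m)) / z).
  { rewrite <- gauss_den_S, gauss_den_succ_l. field. assumption. }
  rewrite E. field. repeat split; assumption.
Qed.

(* The numerator of (x + 1) e^(zL) / (z + x + 1) - 1, where L = ln (x + 1) - ln x. *)
Lemma gauss_factor_num_bound z (x L : R) :
  (2 * Cmod z + 2 <= x)%R -> (/ (x + 1) <= L <= / x)%R ->
  (Cmod (RtoC (x + 1) * (cexp (z * L) - 1 - z * L) + RtoC (L * (x + 1) - 1) * z)
   <= (8 * Cmod z ^ 2 + Cmod z) / x)%R.
Proof.
  intros Hx [HL1 HL2].
  pose proof (Cmod_ge_0 z) as Hc. set (c := Cmod z) in *.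
  assert (Hx0 : (0 < x)%R) by lra.
  set (y := (/ x)%R) in *. assert (Hxy : (x * y = 1)%R) by (apply Rinv_r; lra).
  assert (Hy : (0 < y <= 1/2)%R).
  { split; [apply Rinv_0_lt_compat; lra|]. nra. }
  assert (HL0 : (0 < L)%R).
  { apply (Rlt_le_trans _ (/ (x + 1))); [apply Rinv_0_lt_compat; lra | exact HL1]. }
  assert (HLx1 : (1 <= L * (x + 1))%R).
  { apply (Rmult_le_compat_r (x + 1)) in HL1; [|lra]. rewrite Rinv_l in HL1; lra. }
  assert (Hu : (Cmod (z * L) = c * L)%R).
  { rewrite Cmod_mult, Cmod_R, Rabs_pos_eq by lra. reflexivity. }
  assert (HcL : (c * L <= c * y)%R) by (apply Rmult_le_compat_l; assumption).
  assert (Hcy : (c * y <= 1/2)%R) by nra.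
  pose proof (cexp_sub_linear_bound (z * L) ltac:(lra)) as He. rewrite Hu in He.
  eapply Rle_trans; [apply Cmod_triangle|].
  rewrite !Cmod_mult, !Cmod_R, (Rabs_pos_eq (x + 1)), (Rabs_pos_eq (L * (x + 1) - 1)) by lra.
  fold c. unfold Rdiv. fold y.
  assert (T1 : ((x + 1) * Cmod (cexp (z * L) - 1 - z * L) <= 8 * c ^ 2 * y)%R).
  { eapply Rle_trans; [apply Rmult_le_compat_l; [lra | exact He]|].
    assert (Hsq : ((c * L) ^ 2 <= (c * y) ^ 2)%R) by (apply pow_incr; nra).
    nra. }
  assert (T2 : ((L * (x + 1) - 1) * c <= y * c)%R).
  { apply Rmult_le_compat_r; [exact Hc|].
    assert (L * (x + 1) <= y * (x + 1))%R by (apply Rmult_le_compat_r; lra). lra. }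
  nra.
Qed.

Lemma gauss_factor_bound z (x : R) : (2 * Cmod z + 2 <= x)%R ->
  (Cmod (RtoC (x + 1) * cexp (z * (ln (x + 1) - ln x)) / (z + RtoC (x + 1)) - 1)
   <= 2 * (8 * Cmod z ^ 2 + Cmod z) / x ^ 2)%R.
Proof.
  intros Hx. pose proof (Cmod_ge_0 z).
  set (L := (ln (x + 1) - ln x)%R).
  replace (z * (ln (x + 1) - ln x)) with (z * L) by (unfold L; rewrite RtoC_minus; ring).
  set (den := z + RtoC (x + 1)).
  assert (Hden : (x / 2 <= Cmod den)%R).
  { pose proof (Cmod_add_R_ge z (x + 1) ltac:(lra)) as H'. fold den in H'. lra. }
  assert (Hden0 : den <> 0) by (intro E; rewrite E, Cmod_0 in Hden; lra).
  replace (RtoC (x + 1) * cexp (z * L) / den - 1)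
    with ((RtoC (x + 1) * (cexp (z * L) - 1 - z * L) + RtoC (L * (x + 1) - 1) * z) / den)
    by (unfold den; rewrite RtoC_minus, RtoC_mult; field; exact Hden0).
  rewrite Cmod_div by exact Hden0.
  pose proof (gauss_factor_num_bound z x L Hx (ln_succ_sub_bounds x ltac:(lra))) as Hnum.
  assert (0 <= (8 * Cmod z ^ 2 + Cmod z) / x)%R by (apply Rdiv_le_0_compat; nra).
  apply (Rle_trans _ (((8 * Cmod z ^ 2 + Cmod z) / x) / (x / 2))).
  - unfold Rdiv at 1 3. apply Rmult_le_compat; auto.
    + apply Cmod_ge_0.
    + apply Rlt_le, Rinv_0_lt_compat. lra.
    + apply Rinv_le_contravar; lra.
  - right. field. lra.
Qed.

Lemma Cauchy_cvg_lim (a : nat -> C) :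
  (forall eps : posreal, exists x : C, eventually (fun n => (Cmod (a n - x) < eps)%R)) ->
  filterlim a eventually
    (locally (@lim (CompleteNormedModule.CompleteSpace _ C_CompleteNormedModule)
                   (filtermap a eventually))).
Proof.
  intros H.
  pose proof (@complete_cauchy (CompleteNormedModule.CompleteSpace _ C_CompleteNormedModule)
                (filtermap a eventually)
                (filtermap_proper_filter _ _ _ _ eventually_filter)) as HC.
  apply filterlim_locally. intros eps. apply HC.
  intros e. destruct (H e) as [x Hx]. exists x. unfold filtermap.
  eapply filter_imp; [|exact Hx]. intros n Hn.
  apply (norm_compat1 (K:=C_AbsRing) (V:=C_NormedModule)). exact Hn.
Qed.

Lemma gauss_seq_cvg z : filterlim (gauss_seq z) eventually (locally (CGamma z)).
Proof.
  apply Cauchy_cvg_lim.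
  destruct (INR_unbounded (2 * Cmod z + 2)) as [N0 HN0].
  pose proof (Cmod_ge_0 z).
  apply (ratio_cauchy (gauss_seq z) (2 * (8 * Cmod z ^ 2 + Cmod z)) (N0 + 2)); [nra | lia|].
  intros m Hm.
  assert (Hx : (2 * Cmod z + 2 <= INR m)%R).
  { assert (INR N0 <= INR m)%R by (apply le_INR; lia). lra. }
  rewrite gauss_seq_S by lia.
  match goal with |- context [gauss_seq z m * ?f - gauss_seq z m] =>
    replace (gauss_seq z m * f - gauss_seq z m) with (gauss_seq z m * (f - 1)) by ring end.
  rewrite Cmod_mult, Rmult_comm. apply Rmult_le_compat_r; [apply Cmod_ge_0|].
  rewrite S_INR. apply gauss_factor_bound. exact Hx.
Qed.

Lemma shift_factor_cvg z :
  filterlim (fun m : nat => z * INR m / (z + INR (S m))) eventually (locally z).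
Proof.
  apply filterlim_locally. intros eps.
  set (A := Cmod (z * (z + 1))).
  assert (HA : (0 <= A)%R) by apply Cmod_ge_0.
  pose proof (cond_pos eps).
  destruct (INR_unbounded (A / eps + Cmod z)) as [N HN].
  exists N. intros m Hm.
  apply (norm_compat1 (K:=C_AbsRing) (V:=C_NormedModule)).
  change (Cmod (z * INR m / (z + INR (S m)) - z) < eps)%R.
  assert (HmN : (INR N <= INR m)%R) by (apply le_INR; lia).
  assert (HAeps : (0 <= A / eps)%R) by (apply Rdiv_le_0_compat; lra).
  pose proof (Cmod_add_R_ge z (INR (S m)) (pos_INR _)) as Hd.
  assert (Hnz : z + INR (S m) <> 0).
  { intro E. rewrite E, Cmod_0, S_INR in Hd. lra. }
  replace (z * INR m / (z + INR (S m)) - z) with (- (z * (z + 1)) / (z + INR (S m))).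
  2:{ rewrite S_INR, RtoC_plus in *. field. exact Hnz. }
  rewrite Cmod_div, Cmod_opp by exact Hnz. fold A.
  set (d := Cmod (z + INR (S m))) in *. rewrite S_INR in Hd.
  assert (Hlt : (A / eps < d)%R) by lra.
  apply Rlt_div_l in Hlt; [|lra].
  apply Rlt_div_l; lra.
Qed.

Lemma filterlim_Cmult (f g : nat -> C) a b :
  filterlim f eventually (locally a) -> filterlim g eventually (locally b) ->
  filterlim (fun n => f n * g n) eventually (locally (a * b)).
Proof.
  intros Hf Hg P HP.
  apply locally_C in HP.
  destruct (filterlim_mult (K:=C_AbsRing) a b P HP) as [Q R HQ HR HQR].
  apply locally_C in HQ. apply locally_C in HR.
  pose proof (Hf Q HQ) as E1. pose proof (Hg R HR) as E2. unfold filtermap in *.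
  eapply filter_imp; [|exact (filter_and _ _ E1 E2)].
  intros n [H1 H2]. exact (HQR _ _ H1 H2).
Qed.

Lemma CGamma_succ z : nonpole z -> CGamma (z + 1) = z * CGamma z.
Proof.
  intros H.
  apply (filterlim_locally_unique (K:=C_AbsRing) (V:=C_NormedModule) (F:=eventually)
           (gauss_seq (z + 1))); [apply gauss_seq_cvg|].
  eapply filterlim_ext_loc.
  - exists 1%nat. intros m Hm. symmetry. apply gauss_seq_add1; assumption.
  - rewrite Cmult_comm. apply filterlim_Cmult; [apply gauss_seq_cvg | apply shift_factor_cvg].
Qed.

(** * Pochhammer symbols *)

Fixpoint poch (w : C) (k : nat) : C :=
  match k with O => 1 | S k' => poch w k' * (w + INR k') end.

Lemma poch_neq0 w k : nonpole w -> poch w k <> 0.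
Proof.
  intros H. induction k as [|k IHk]; simpl.
  - intro E. injection E. lra.
  - apply Cmult_neq_0; auto.
Qed.

Lemma poch_succ_l w k : poch w (S k) = w * poch (w + 1) k.
Proof.
  induction k as [|k IHk]; [simpl; ring|].
  change (poch w (S (S k))) with (poch w (S k) * (w + INR (S k))).
  rewrite IHk. cbn [poch]. rewrite S_INR, RtoC_plus. ring.
Qed.

Lemma poch_one k : poch 1 k = INR (fact k).
Proof.
  induction k as [|k IHk]; [reflexivity|].
  cbn [poch]. rewrite IHk, fact_simpl, mult_INR, S_INR, RtoC_mult, RtoC_plus. ring.
Qed.

Lemma CGamma_add_nat w k : nonpole w -> CGamma (w + INR k) = poch w k * CGamma w.
Proof.
  intros H. induction k as [|k IHk].
  - simpl. replace (w + 0) with w by ring. ring.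
  - replace (w + INR (S k)) with ((w + INR k) + 1) by (rewrite S_INR, RtoC_plus; ring).
    rewrite CGamma_succ by (apply nonpole_add_nat; exact H).
    rewrite IHk. simpl. ring.
Qed.

Lemma Cbinom_add_nat r s k l :
  nonpole (r + 1) -> nonpole (s + 1) -> nonpole (r - s + 1) ->
  Cbinom (INR (k + l) + r) (INR k + s)
  = poch (r + 1) (k + l) / (poch (s + 1) k * poch (r - s + 1) l) * Cbinom r s.
Proof.
  intros Hr Hs Hrs. unfold Cbinom.
  replace (INR (k + l) + r + 1) with ((r + 1) + INR (k + l)) by ring.
  replace (INR k + s + 1) with ((s + 1) + INR k) by ring.
  replace (INR (k + l) + r - (INR k + s) + 1) with ((r - s + 1) + INR l)
    by (rewrite plus_INR, RtoC_plus; ring).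
  rewrite !CGamma_add_nat by assumption.
  unfold Cdiv. rewrite !Cinv_mult_distr. ring.
Qed.

(** * A binomial transform of Pascal-type kernels *)

(* Coquelicot's [sum_n] lemmas restated with [Cplus] and [Cmult] in place of the
   abstract [plus] and [mult], so that [ring] and [field] see through rewritten goals. *)
Lemma Csum_O (a : nat -> C) : sum_n a 0 = a 0%nat.
Proof. exact (sum_O a). Qed.

Lemma Csum_Sn (a : nat -> C) n : sum_n a (S n) = sum_n a n + a (S n).
Proof. exact (sum_Sn a n). Qed.

Lemma Csum_ext_loc (a b : nat -> C) n :
  (forall k, (k <= n)%nat -> a k = b k) -> sum_n a n = sum_n b n.
Proof. exact (sum_n_ext_loc a b n). Qed.

Lemma Csum_plus (a b : nat -> C) n : sum_n (fun k => a k + b k) n = sum_n a n + sum_n b n.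
Proof. exact (sum_n_plus a b n). Qed.

Lemma Csum_mult_l (c : C) (a : nat -> C) n : sum_n (fun k => c * a k) n = c * sum_n a n.
Proof. exact (@sum_n_mult_l C_Ring c a n). Qed.

Lemma Csum_Sn_l (a : nat -> C) n :
  @eq C (sum_n a (S n)) (a 0%nat + sum_n (fun k => a (S k)) n).
Proof.
  induction n as [|n IHn].
  - rewrite Csum_Sn, !Csum_O. reflexivity.
  - rewrite Csum_Sn, IHn, Csum_Sn. ring.
Qed.

Lemma Csum_binomial_succ (f : nat -> C) n :
  @eq C (sum_n (fun k => Binomial.C (S n) k * f k) (S n))
    (sum_n (fun k => Binomial.C n k * f k) n + sum_n (fun k => Binomial.C n k * f (S k)) n).
Proof.
  destruct n as [|m].
  - rewrite Csum_Sn, !Csum_O, !C_n_0, C_n_n. ring.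
  - rewrite Csum_Sn_l, C_n_0, Csum_Sn.
    rewrite (Csum_ext_loc (fun k => Binomial.C (S (S m)) (S k) * f (S k))
      (fun k => Binomial.C (S m) k * f (S k) + Binomial.C (S m) (S k) * f (S k))).
    2:{ intros k Hk. rewrite <- pascal by lia. rewrite RtoC_plus. ring. }
    rewrite Csum_plus, C_n_n.
    rewrite (Csum_Sn_l (fun k => Binomial.C (S m) k * f k)).
    rewrite (Csum_Sn (fun k => Binomial.C (S m) k * f (S k))).
    rewrite C_n_0, C_n_n. ring.
Qed.

(* B(p, k + 1) = k! / (p (p + 1) ... (p + k)), the Beta integral of t^(p-1) (1-t)^k. *)
Definition beta_poch (p : C) (k : nat) : C := INR (fact k) / poch p (S k).

Lemma beta_poch_succ p k :
  nonpole p -> beta_poch (p + 1) k = beta_poch p k - beta_poch p (S k).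
Proof.
  intros H. unfold beta_poch.
  rewrite !(poch_succ_l p). cbn [poch]. rewrite fact_simpl, mult_INR, !RtoC_mult, S_INR, RtoC_plus.
  pose proof (poch_neq0 (p + 1) k (nonpole_succ p H)).
  pose proof (nonpole_succ p H k). pose proof (nonpole_neq0 p H).
  field. repeat split; assumption.
Qed.

Lemma beta_poch_two k : beta_poch 2 k = / ((INR k + 1) * (INR k + 2)).
Proof.
  assert (E : poch 2 (S k) = poch 1 (S (S k))).
  { rewrite (poch_succ_l 1), <- RtoC_plus. replace (1 + 1)%R with 2%R by ring. ring. }
  unfold beta_poch. rewrite E, poch_one, !fact_simpl, !mult_INR, !S_INR, !RtoC_mult, !RtoC_plus.
  pose proof (INR_fact_neq_0 k). pose proof (pos_INR k).
  field. repeat split; intro Heq; injection Heq; lra.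
Qed.

Lemma binomial_sum_pascal_kernel n : forall (p : C) (nu : nat -> nat -> C),
  nonpole p -> (forall k l, nu k l = nu k (S l) + nu (S k) l) ->
  sum_n (fun k => Binomial.C n k * (nu k (n - k)%nat / (p + INR k))) n
  = sum_n (fun k => Binomial.C n k * (RtoC ((-1) ^ k) * beta_poch p k * nu k 0%nat)) n.
Proof.
  induction n as [|n IHn]; intros p nu Hp Hnu.
  - rewrite !Csum_O. unfold beta_poch. simpl. rewrite C_n_0. field. exact (nonpole_neq0 p Hp).
  - rewrite !Csum_binomial_succ.
    rewrite (Csum_ext_loc _ (fun k => Binomial.C n k * (nu k (S (n - k)) / (p + INR k))))
      by (intros k Hk; do 3 f_equal; lia).
    rewrite (Csum_ext_loc (fun k => Binomial.C n k * (nu (S k) (S n - S k)%nat / (p + INR (S k))))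
               (fun k => Binomial.C n k * (nu (S k) (n - k)%nat / (p + 1 + INR k))))
      by (intros k Hk; rewrite Nat.sub_succ, S_INR, RtoC_plus;
          replace (p + (INR k + 1)) with (p + 1 + INR k) by ring; reflexivity).
    rewrite (IHn p (fun a b => nu a (S b)) Hp (fun k l => Hnu k (S l))).
    rewrite (IHn (p + 1) (fun a b => nu (S a) b) (nonpole_succ p Hp) (fun k l => Hnu (S k) l)).
    rewrite <- !Csum_plus. apply Csum_ext_loc. intros k Hk.
    rewrite (Hnu k 0%nat), beta_poch_succ by assumption.
    change ((-1) ^ S k)%R with (-1 * (-1) ^ k)%R.
    rewrite RtoC_mult. ring.
Qed.

Definition poch_ratio (a b : C) (k l : nat) : C := poch a k * poch b l / poch (a + b) (k + l).

Lemma poch_ratio_pascal a b k l : nonpole (a + b) ->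
  poch_ratio a b k l = poch_ratio a b k (S l) + poch_ratio a b (S k) l.
Proof.
  intros H. unfold poch_ratio. rewrite Nat.add_succ_r. simpl (S k + l)%nat. cbn [poch].
  pose proof (poch_neq0 (a + b) (k + l) H). pose proof (H (k + l)%nat).
  rewrite plus_INR, RtoC_plus in *. field. split; assumption.
Qed.

Section Summands.

Variables r s : C.
Hypotheses (Hr : nonpole (r + 1)) (Hs : nonpole (s + 1)) (Hrs : nonpole (r - s + 1)).
Hypothesis Hs0 : s <> 0.

Let nu := poch_ratio s (r - s + 1).

Let poch_s_succ k : poch (s + 1) k = poch s k * (s + INR k) / s.
Proof.
  pose proof (poch_succ_l s k) as E. cbn [poch] in E. rewrite E. field. exact Hs0.
Qed.

Lemma lhs_summand_eq n k : (k <= n)%nat ->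
  Binomial.C n k / ((INR k + 2) * (INR k + s) * Cbinom (INR n + r) (INR k + s))
  = / (s * Cbinom r s) * (Binomial.C n k * (nu k (n - k)%nat / (2 + INR k))).
Proof.
  intros Hk.
  replace (INR n + r) with (INR (k + (n - k)) + r) by (do 3 f_equal; lia).
  rewrite Cbinom_add_nat by assumption.
  unfold nu, poch_ratio. replace (s + (r - s + 1)) with (r + 1) by ring.
  replace (k + (n - k))%nat with n by lia.
  rewrite poch_s_succ.
  pose proof (poch_neq0 s k (nonpole_of_succ s Hs0 Hs)).
  pose proof (poch_neq0 (r + 1) n Hr). pose proof (poch_neq0 (r - s + 1) (n - k) Hrs).
  pose proof (nonpole_of_succ s Hs0 Hs k). pose proof (nonpole_pos 2 ltac:(lra) k).
  unfold Cdiv. rewrite !Cinv_mult_distr. generalize (/ Cbinom r s). intros g.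
  field. repeat split; assumption.
Qed.

Lemma rhs_summand_eq n k :
  Binomial.C n k * RtoC ((-1) ^ k)
  / ((INR k + 1) * (INR k + 2) * (INR k + s) * Cbinom (INR k + r) (INR k + s))
  = / (s * Cbinom r s) * (Binomial.C n k * (RtoC ((-1) ^ k) * beta_poch 2 k * nu k 0%nat)).
Proof.
  replace (INR k + r) with (INR (k + 0) + r) by (rewrite Nat.add_0_r; reflexivity).
  rewrite Cbinom_add_nat by assumption.
  unfold nu, poch_ratio. replace (s + (r - s + 1)) with (r + 1) by ring.
  rewrite Nat.add_0_r, beta_poch_two, poch_s_succ. cbn [poch].
  pose proof (poch_neq0 s k (nonpole_of_succ s Hs0 Hs)).
  pose proof (poch_neq0 (r + 1) k Hr).
  pose proof (nonpole_of_succ s Hs0 Hs k).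
  unfold Cdiv. rewrite !Cinv_mult_distr. generalize (/ Cbinom r s). intros g.
  field. repeat split; try assumption; rewrite Cplus_comm; apply nonpole_pos; lra.
Qed.

End Summands.

Theorem theorem20 (n : nat) (r s : C) :
  ~ in_Zneg r -> ~ in_Zneg s -> s <> 0 -> ~ in_Zneg (r - s) ->
  sum_n (fun k : nat =>
           RtoC (Binomial.C n k)
           / ((RtoC (INR k) + 2) * (RtoC (INR k) + s)
              * Cbinom (RtoC (INR n) + r) (RtoC (INR k) + s))) n
  = sum_n (fun k : nat =>
           RtoC (Binomial.C n k) * RtoC ((-1) ^ k)
           / ((RtoC (INR k) + 1) * (RtoC (INR k) + 2) * (RtoC (INR k) + s)
              * Cbinom (RtoC (INR k) + r) (RtoC (INR k) + s))) n.
Proof.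
  intros Hr Hs Hs0 Hrs.
  apply not_in_Zneg_nonpole in Hr, Hs, Hrs.
  rewrite (Csum_ext_loc _ _ n (fun k Hk => lhs_summand_eq r s Hr Hs Hrs Hs0 n k Hk)).
  rewrite (Csum_ext_loc _ _ n (fun k _ => rhs_summand_eq r s Hr Hs Hrs Hs0 n k)).
  rewrite !Csum_mult_l. f_equal.
  apply binomial_sum_pascal_kernel.
  - apply nonpole_pos. lra.
  - intros k l. apply poch_ratio_pascal.
    replace (s + (r - s + 1)) with (r + 1) by ring. exact Hr.
Qed.
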